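(* Let $\beta\in(0,1]$, $m\ge0$ an integer, and $\theta=(k_r)$ a lacunary sequence. If $\liminf_{r\to\infty}\frac{h_r^\beta}{k_r}>0$, then $S(F,\Delta^m)\subset S_\theta^\beta(F,\Delta^m)$ (with the same limit).
   Context: A fuzzy number is a map $X:\mathbb{R}\to[0,1]$ which is normal, fuzzy convex, upper semicontinuous, with compact closure of $\{t:X(t)>0\}$; $L(\mathbb{R})$ is the set of fuzzy numbers. Level sets $[X]^\alpha=\{t:X(t)\ge\alpha\}$ ($\alpha\in(0,1]$), $[X]^0=\overline{\{t:X(t)>0\}}$, are compact intervals $[u^\alpha,v^\alpha]$. Subtraction: $[X-Y]^\alpha=[u_1^\alpha-v_2^\alpha,v_1^\alpha-u_2^\alpha]$. Metric: $d(X,Y)=\sup_{\alpha\in[0,1]}\max\{|u_1^\alpha-u_2^\alpha|,|v_1^\alpha-v_2^\alpha|\}$. $(\Delta^0X)_k=X_k$, $(\Delta^1X)_k=X_k-X_{k+1}$, $(\Delta^mX)_k=(\Delta^1(\Delta^{m-1}X))_k$. A lacunary sequence is an increasing integer sequence $\theta=(k_r)_{r\ge0}$ with $k_0=0$, $h_r=k_r-k_{r-1}\to\infty$; $I_r=(k_{r-1},k_r]$. $S_\theta^\beta(F,\Delta^m)$: sequences $X$ with some $X_0\in L(\mathbb{R})$ (the limit) such that for all $\varepsilon>0$, $\lim_r\frac{1}{h_r^\beta}|\{k\in I_r:d(\Delta^mX_k,X_0)\ge\varepsilon\}|=0$. $S(F,\Delta^m)$: sequences $X$ with some $X_0\in L(\mathbb{R})$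 (the limit) such that for all $\varepsilon>0$, $\lim_{n\to\infty}\frac{1}{n}|\{k\le n:d(\Delta^mX_k,X_0)\ge\varepsilon\}|=0$. *)

From HB Require Import structures.
From mathcomp Require Import all_boot all_order all_algebra.
From mathcomp Require Import all_classical all_reals all_analysis.
Set Implicit Arguments. Unset Strict Implicit. Unset Printing Implicit Defensive.
Import Order.TTheory GRing.Theory Num.Theory.
Import numFieldNormedType.Exports.
Local Open Scope classical_set_scope.
Local Open Scope ring_scope.

Section Fuzzy.
Variable R : realType.

Definition is_fuzzy_number (X : R -> R) : Prop :=
  [/\ (forall t, 0 <= X t <= 1),
      (exists t, X t = 1),
      (forall s t l, 0 <= l <= 1 -> Num.min (X s) (X t) <= X (l * s + (1 - l) * t)),
      (forall t (e : R), 0 < e -> \forall s \near t, X s < X t + e) &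
      compact (closure [set t | 0 < X t])].

Definition levelset (X : R -> R) (a : R) : set R :=
  if a == 0 then closure [set t | 0 < X t] else [set t | a <= X t].

(* endpoints u^a and v^a of [X]^a = [u^a, v^a] *)
Definition lev_lo (X : R -> R) (a : R) : R := inf (levelset X a).
Definition lev_hi (X : R -> R) (a : R) : R := sup (levelset X a).

(* subtraction: the fuzzy number whose a-level set is
   [u1^a - v2^a, v1^a - u2^a] (membership = sup of levels containing t) *)
Definition fsub (X Y : R -> R) : R -> R := fun t =>
  sup [set a | 0 <= a <= 1 /\
               lev_lo X a - lev_hi Y a <= t <= lev_hi X a - lev_lo Y a].

Definition fdist (X Y : R -> R) : R :=
  sup [set Num.max `|lev_lo X a - lev_lo Y a| `|lev_hi X a - lev_hi Y a|
      | a in `[0, 1]].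

Fixpoint fdelta (m : nat) (X : nat -> R -> R) : nat -> R -> R :=
  match m with
  | 0 => X
  | m'.+1 => fun k => fsub (fdelta m' X k) (fdelta m' X k.+1)
  end.

Definition stat_conv (m : nat) (X : nat -> R -> R) (X0 : R -> R) : Prop :=
  forall e : R, 0 < e ->
    (fun n : nat => (count (fun k => e <= fdist (fdelta m X k) X0)
                           (iota 1 n))%:R / n%:R) @ \oo --> (0 : R).

End Fuzzy.

Definition hr (theta : nat -> nat) (r : nat) : nat := theta r - theta r.-1.

Definition lacunary (theta : nat -> nat) : Prop :=
  [/\ theta 0 = 0%N,
      (forall r, theta r < theta r.+1)%N &
      (forall M : nat, exists N : nat, forall r, (N <= r -> M <= hr theta r)%N)].

Section Lac.
Variable R : realType.
(* lacunary beta-statistical Delta^m-convergence to X0;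
   I_r = (k_{r-1}, k_r] *)
Definition lac_stat_conv (beta : R) (theta : nat -> nat) (m : nat)
    (X : nat -> R -> R) (X0 : R -> R) : Prop :=
  forall e : R, 0 < e ->
    (fun r : nat =>
       (count (fun k => e <= fdist (fdelta m X k) X0)
              (iota (theta r.-1).+1 (hr theta r)))%:R
       / ((hr theta r)%:R `^ beta)) @ \oo --> (0 : R).
End Lac.

(* The window I_r = (k_{r-1}, k_r] is contained in [1, k_r], so the number of
   bad indices in I_r is at most the number in [1, k_r]; eventually
   h_r^beta >= c k_r for some c > 0, hence the lacunary ratio is bounded by
   1/c times the Cesaro ratio at k_r, which tends to 0 since k_r -> oo. *)
From HB Require Import structures.
From mathcomp Require Import all_boot all_order all_algebra.
From mathcomp Require Import all_classical all_reals all_analysis.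
Import Order.TTheory GRing.Theory Num.Theory.
Import numFieldNormedType.Exports.
Local Open Scope classical_set_scope.
Local Open Scope ring_scope.

Lemma increasing_nat_cvgy (u : nat -> nat) :
  (forall n, u n < u n.+1)%N -> u @ \oo --> \oo.
Proof.
move=> u_incr; have u_ge n : (n <= u n)%N.
  by elim: n => [|n IHn] //; exact: leq_ltn_trans IHn (u_incr n).
move=> A [N _ NA]; exists N => // n Nn; apply: NA.
exact: leq_trans Nn (u_ge n).
Qed.

Lemma limn_einf_gt0_near (R : realType) (u : nat -> R) :
  (0 < limn_einf (fun n => (u n)%:E))%E ->
  exists2 c : R, 0 < c & \forall n \near \oo, c <= u n.
Proof.
rewrite limn_einf_lim.
have -> : limn (einfs (fun n => (u n)%:E)) =
          ereal_sup (range (einfs (fun n => (u n)%:E))).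
  by apply/cvg_lim => //; exact: cvg_einfs_sup.
set S := ereal_sup _ => S_gt0.
have [c c_gt0 cS] : exists2 c : R, 0 < c & (c%:E < S)%E.
  move: S_gt0; case: S => [s||] //.
  - rewrite lte_fin => s_gt0; exists (s / 2); first by rewrite divr_gt0.
    by rewrite lte_fin ltr_pdivrMr // ltr_pMr // ltr1n.
  - by move=> _; exists 1; rewrite ?ltey.
case/ereal_sup_gt: cS => _ [N _ <-] cN.
exists c => //; exists N => // n Nn.
rewrite -lee_fin; apply: (ltW (lt_le_trans cN _)).
by apply: ereal_inf_lbound; exists n.
Qed.

Lemma hr_succE (theta : nat -> nat) r :
  (theta r <= theta r.+1)%N -> theta r.+1 = (theta r + hr theta r.+1)%N.
Proof. by move=> theta_le; rewrite /hr subnKC. Qed.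

Lemma count_iota_window_le (P : pred nat) m n :
  (count P (iota m.+1 n) <= count P (iota 1 (m + n)))%N.
Proof. by rewrite iotaD count_cat add1n leq_addl. Qed.

Lemma window_ratio_le (R : realFieldType) (i j p c : R) (n : nat) :
  0 < c -> (0 < n)%N -> 0 < p -> c * n%:R <= p -> 0 <= i <= j ->
  i / p <= j / n%:R / c.
Proof.
move=> c_gt0 n_gt0 p_gt0 cnp /andP[i_ge0 ij].
have j_ge0 : 0 <= j by exact: le_trans ij.
apply: (@le_trans _ _ (j / p)); first by rewrite ler_wpM2r // invr_ge0 ltW.
rewrite -mulrA -invfM; apply: ler_wpM2l => //.
by rewrite lef_pV2 ?posrE ?mulr_gt0 ?ltr0n // mulrC.
Qed.

Theorem theorem2p10 (R : realType) (beta : R) (m : nat) (theta : nat -> nat)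
  (X : nat -> R -> R) (X0 : R -> R) :
  0 < beta <= 1 ->
  lacunary theta ->
  (0 < limn_einf (fun r : nat =>
          (((hr theta r)%:R `^ beta) / (theta r)%:R)%:E))%E ->
  (forall k, is_fuzzy_number (X k)) ->
  is_fuzzy_number X0 ->
  stat_conv m X X0 ->
  lac_stat_conv beta theta m X X0.
Proof.
move=> _ [_ theta_incr _] /limn_einf_gt0_near[c c_gt0 hc] _ _ stat e e_gt0.
set P := fun k => e <= fdist (fdelta m X k) X0.
set a := fun n : nat => (count P (iota 1 n))%:R / (n%:R : R).
have a_theta : (fun r => a (theta r) / c) @ \oo --> (0 : R).
  rewrite -(mul0r c^-1); apply: cvgMr_tmp.
  exact: (cvg_comp theta a (increasing_nat_cvgy _ theta_incr) (stat e e_gt0)).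
apply: (squeeze_cvgr _ (cvg_cst 0) a_theta); apply: near_inftyS; near=> r.
have theta_gt0 : (0 < theta r.+1)%N by exact: leq_ltn_trans (theta_incr r).
have p_gt0 : 0 < (hr theta r.+1)%:R `^ beta.
  by rewrite powR_gt0 // ltr0n subn_gt0 theta_incr.
apply/andP; split; first by rewrite divr_ge0 // ltW.
apply: window_ratio_le => //.
- rewrite -ler_pdivlMr ?ltr0n //.
  by near: r; case: hc => N _ hN; exists N => // n /leqW /hN.
- rewrite ler0n /= ler_nat (hr_succE _ _ (ltnW (theta_incr r))).
  exact: count_iota_window_le.
Unshelve. all: end_near.
Qed.
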